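(* Let $d\ge 2$, $s=d-1$, $\eta=\mathrm{diag}(-1,1,\dots,1)$, and let $E=\begin{pmatrix}e_0 & e_1^{\mathsf T}\\ e_2 & e_3\end{pmatrix}$ be a real invertible $d\times d$ matrix (a vielbein), where $e_0\in\mathbb R$, $e_1,e_2\in\mathbb R^{s}$, and $e_3$ is an invertible real $s\times s$ matrix. Let $g=E^{\mathsf T}\eta E$. Then the following are equivalent: (i) there exists a Lorentz transformation $\Lambda$ (i.e. $\Lambda^{\mathsf T}\eta\Lambda=\eta$) of the form $\Lambda=\begin{pmatrix}\lambda & p^{\mathsf T}\\ p & (I+pp^{\mathsf T})^{1/2}\end{pmatrix}\begin{pmatrix}1&0\\0&R\end{pmatrix}$ with $p\in\mathbb R^s$, $\lambda=(1+p^{\mathsf T}p)^{1/2}$, $R\in O(s)$, such that $\Lambda E$ is block lower triangular, i.e. $\Lambda E=\begin{pmatrix}N & 0\\ eN^{\vec{}} & e\end{pmatrix}$ for some $N\in\mathbb R$, $\vec N\in\mathbb R^s$ and $s\times s$ matrix $e$; (ii) $1-e_1^{\mathsf T}(e_3^{\mathsf T}e_3)^{-1}e_1>0$; (iii) $g^{00}<0$, i.e. the apparent lapse $N=(-g^{00})^{-1/2}$ of $g$ in the given coordinates is real, where $N^2=(e_0-e_1^{\mathsf T}e_3^{-1}e_2)^2\big(1-e_1^{\mathsf T}(e_3^{\mathsf T}e_3)^{-1}e_1\big)^{-1}$.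
   Context: Here $g^{00}$ denotes the $(0,0)$ entry of $g^{-1}$, and indices $0,1,\dots,s$ label rows/columns with $0$ the time direction. ''Block lower triangular'' means the $1\times s$ upper-right block of $\Lambda E$ vanishes. *)

(* real-closed field R (generalizes the reals; statement is algebraic). *)
From HB Require Import structures.
From mathcomp Require Import all_boot all_order all_algebra.
Set Implicit Arguments. Unset Strict Implicit. Unset Printing Implicit Defensive.
Import Order.TTheory GRing.Theory Num.Theory.
Local Open Scope ring_scope.

Definition minkowski (R : rcfType) (s : nat) : 'M[R]_(1 + s) :=
  block_mx (-1)%:M 0 0 1%:M.
Arguments minkowski R s : clear implicits.

Definition vielbein (R : rcfType) (s : nat) (e0 : R) (e1 e2 : 'cV[R]_s)
  (e3 : 'M[R]_s) : 'M[R]_(1 + s) :=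
  block_mx e0%:M e1^T e2 e3.

Definition is_psd_sqrt (R : rcfType) (n : nat) (A S : 'M[R]_n) : Prop :=
  [/\ S^T = S, (forall v : 'rV[R]_n, 0 <= (v *m S *m v^T) ord0 ord0)
    & S *m S = A].

Definition orthogonal_mx (R : rcfType) (n : nat) (Q : 'M[R]_n) : Prop :=
  Q^T *m Q = 1%:M.

Definition lorentz (R : rcfType) (s : nat) (L : 'M[R]_(1 + s)) : Prop :=
  L^T *m minkowski R s *m L = minkowski R s.

Definition boost_rot (R : rcfType) (s : nat) (p : 'cV[R]_s) (S Q : 'M[R]_s)
  : 'M[R]_(1 + s) :=
  block_mx (Num.sqrt (1 + (p^T *m p) ord0 ord0))%:M p^T p S
  *m block_mx 1%:M 0 0 Q.

From HB Require Import structures.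
From mathcomp Require Import all_boot all_order all_algebra.
From mathcomp Require Import ring.
Set Implicit Arguments. Unset Strict Implicit. Unset Printing Implicit Defensive.
Import Order.TTheory GRing.Theory Num.Theory.
Local Open Scope ring_scope.

(* Put w := e1^T e3^-1, so that e1^T (e3^T e3)^-1 e1 = |w|^2.  The upper-right
   block of Lambda E is lambda e1^T + p^T R e3, so it vanishes iff
   p^T R = - lambda w; since |p^T R| = |p| and lambda^2 = 1 + |p|^2, this forces
   lambda^2 (1 - |w|^2) = 1.  Conversely lambda := (1 - |w|^2)^(-1/2),
   p := - lambda w^T and R := 1 work, with the explicit square root
   (I + p p^T)^(1/2) = I + p p^T / (1 + lambda).
   For the lapse, g^-1 = E^-1 eta E^-T and the first row of E^-1 is a (1, -w)
   with a sigma = 1, whence g^00 = - a^2 (1 - |w|^2). *)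

Section MatrixInverse.
Variable R : comUnitRingType.

Lemma invmx_mul n (A B : 'M[R]_n) : A \in unitmx -> B \in unitmx ->
  invmx (A *m B) = invmx B *m invmx A.
Proof.
move=> uA uB; have AB_inv : (A *m B) *m (invmx B *m invmx A) = 1%:M.
  by rewrite -mulmxA (mulmxA B) mulmxV // mul1mx mulmxV.
have [uAB _] := mulmx1_unit AB_inv.
by rewrite -[RHS](mulKmx uAB) AB_inv mulmx1.
Qed.

Lemma quad_invmx_trmx_mul n (v : 'cV[R]_n) (A : 'M[R]_n) : A \in unitmx ->
  v^T *m invmx (A^T *m A) *m v = (v^T *m invmx A) *m (v^T *m invmx A)^T.
Proof.
by move=> uA; rewrite invmx_mul ?unitmx_tr // trmx_mul trmx_inv trmxK !mulmxA.
Qed.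

End MatrixInverse.

Lemma mulmx_trmx_ge0 (R : realDomainType) n (x : 'rV[R]_n) :
  0 <= (x *m x^T) ord0 ord0.
Proof. by rewrite mxE; apply: sumr_ge0 => i _; rewrite mxE -expr2 sqr_ge0. Qed.

Lemma trmx_mulmx_ge0 (R : realDomainType) n (x : 'cV[R]_n) :
  0 <= (x^T *m x) ord0 ord0.
Proof. by rewrite -[X in _ *m X]trmxK mulmx_trmx_ge0. Qed.

Lemma mulmx_orthogonal_trmx (R : rcfType) m n (x : 'M[R]_(m, n))
  (Q : 'M[R]_n) : orthogonal_mx Q -> (x *m Q) *m (x *m Q)^T = x *m x^T.
Proof.
by move=> QQ; rewrite trmx_mul mulmxA -(mulmxA x) (mulmx1C QQ) mulmx1.
Qed.

Section Minkowski.
Variables (R : rcfType) (s : nat).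
Local Notation eta := (minkowski R s).

Lemma minkowski_sqr : eta *m eta = 1%:M.
Proof.
rewrite /minkowski mulmx_block !mulmx0 !mul0mx !addr0 !add0r mulmx1.
by rewrite -scalar_mxM mulrNN mulr1 -scalar_mx_block.
Qed.

Lemma invmx_metric (E : 'M[R]_(1 + s)) : E \in unitmx ->
  invmx (E^T *m eta *m E) = invmx E *m eta *m (invmx E)^T.
Proof.
move=> uE; have ueta : eta \in unitmx by case: (mulmx1_unit minkowski_sqr).
have eta_inv : invmx eta = eta.
  by rewrite -[RHS](mulKmx ueta) minkowski_sqr mulmx1.
by rewrite !invmx_mul ?unitmx_mul ?unitmx_tr ?uE ?ueta // eta_inv trmx_inv mulmxA.
Qed.

Lemma ulsubmx_conj_minkowski (X : 'M[R]_(1 + s)) :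
  ulsubmx (X *m eta *m X^T) =
  ursubmx X *m (ursubmx X)^T - ulsubmx X *m (ulsubmx X)^T.
Proof.
rewrite -[X]submxK /minkowski tr_block_mx !mulmx_block block_mxKul.
rewrite !mulmx0 !addr0 add0r mulmx1 mul_mx_scalar scaleN1r mulNmx addrC.
by rewrite block_mxKur block_mxKul.
Qed.

Definition lorentz_factor (p : 'cV[R]_s) : R :=
  Num.sqrt (1 + (p^T *m p) ord0 ord0).

Lemma lorentz_factor_sqr p : lorentz_factor p ^+ 2 = 1 + (p^T *m p) ord0 ord0.
Proof. by rewrite sqr_sqrtr // addr_ge0 // trmx_mulmx_ge0. Qed.

Lemma lorentz_factor_gt0 p : 0 < lorentz_factor p.
Proof. by rewrite sqrtr_gt0 ltr_wpDr // trmx_mulmx_ge0. Qed.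

Lemma boost_rot1 p S :
  boost_rot p S 1%:M = block_mx (lorentz_factor p)%:M p^T p S.
Proof. by rewrite /boost_rot -scalar_mx_block mulmx1. Qed.

Lemma lorentz_boost_rot1 p S : S^T = S -> S *m p = lorentz_factor p *: p ->
  S *m S = 1%:M + p *m p^T -> lorentz (boost_rot p S 1%:M).
Proof.
move=> S_sym Sp SS; have pS : p^T *m S = lorentz_factor p *: p^T.
  by rewrite -[LHS]trmxK trmx_mul S_sym trmxK Sp linearZ.
rewrite boost_rot1 /lorentz /minkowski tr_block_mx tr_scalar_mx trmxK S_sym.
rewrite !mulmx_block !mulmx0 ?mul0mx ?addr0 ?add0r ?mulmx1 Sp pS SS.
rewrite -!scalar_mxM !mul_mx_scalar !mul_scalar_mx.
congr block_mx.
- rewrite (mx11_scalar (p^T *m p)) -raddfD mulrN1 mulNr -expr2 lorentz_factor_sqr.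
  by congr (_%:M); ring.
- by rewrite -scalerDl mulrN1 addNr scale0r.
- by rewrite scaleN1r scalerN addNr.
- by rewrite scaleN1r mulNmx addrCA addNr addr0.
Qed.

Definition boost_sqrt (p : 'cV[R]_s) : 'M[R]_s :=
  1%:M + (1 + lorentz_factor p)^-1 *: (p *m p^T).

Section BoostSqrt.
Variable p : 'cV[R]_s.
Local Notation gamma := (lorentz_factor p).
Local Notation S := (boost_sqrt p).

Let gamma1_neq0 : 1 + gamma != 0.
Proof. by rewrite gt_eqF // ltr_wpDr // ltW // lorentz_factor_gt0. Qed.

Lemma trmx_boost_sqrt : S^T = S.
Proof. by rewrite /boost_sqrt raddfD /= trmx1 linearZ /= trmx_mul trmxK. Qed.

Lemma boost_sqrt_mulmx : S *m p = gamma *: p.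
Proof.
rewrite /boost_sqrt mulmxDl mul1mx -scalemxAl -mulmxA (mx11_scalar (p^T *m p)).
rewrite mul_mx_scalar scalerA -{1}[p]scale1r -scalerDl; congr (_ *: _).
have gamma2 := lorentz_factor_sqr p.
by field: gamma2.
Qed.

Lemma boost_sqrt_sqr : S *m S = 1%:M + p *m p^T.
Proof.
have pS : p^T *m S = gamma *: p^T.
  by rewrite -[LHS]trmxK trmx_mul trmx_boost_sqrt trmxK boost_sqrt_mulmx linearZ.
rewrite {1}/boost_sqrt mulmxDl mul1mx -scalemxAl -mulmxA pS -scalemxAr scalerA.
rewrite /boost_sqrt -addrA -scalerDl.
have -> : (1 + gamma)^-1 + (1 + gamma)^-1 * gamma = 1 by field.
by rewrite scale1r.
Qed.

Lemma boost_sqrt_psd (v : 'rV[R]_s) : 0 <= (v *m S *m v^T) ord0 ord0.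
Proof.
have -> : v *m S *m v^T = v *m v^T + (1 + gamma)^-1 *: ((v *m p) *m (v *m p)^T).
  rewrite /boost_sqrt mulmxDr mulmx1 mulmxDl; congr (_ + _).
  by rewrite -scalemxAr -scalemxAl trmx_mul !mulmxA.
rewrite mxE addr_ge0 ?mulmx_trmx_ge0 // mxE mulr_ge0 ?mulmx_trmx_ge0 //.
by rewrite invr_ge0 addr_ge0 // ltW // lorentz_factor_gt0.
Qed.

Lemma is_psd_sqrt_boost_sqrt : is_psd_sqrt (1%:M + p *m p^T) S.
Proof.
by split; [exact: trmx_boost_sqrt | exact: boost_sqrt_psd | exact: boost_sqrt_sqr].
Qed.

Lemma lorentz_boost : lorentz (boost_rot p S 1%:M).
Proof.
exact: lorentz_boost_rot1 trmx_boost_sqrt boost_sqrt_mulmx boost_sqrt_sqr.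
Qed.

End BoostSqrt.

End Minkowski.

Section Vielbein.
Variables (R : rcfType) (s : nat) (e0 : R) (e1 e2 : 'cV[R]_s) (e3 : 'M[R]_s).
Hypothesis ue3 : e3 \in unitmx.
Local Notation E := (vielbein e0 e1 e2 e3).
Local Notation w := (e1^T *m invmx e3).

Lemma ursubmx_boost_rot_vielbein p S Q :
  ursubmx (boost_rot p S Q *m E) = lorentz_factor p *: e1^T + p^T *m Q *m e3.
Proof.
rewrite /boost_rot /vielbein !mulmx_block block_mxKur.
by rewrite !mulmx0 !mulmx1 !addr0 !add0r mul_scalar_mx.
Qed.

Lemma block_lower_boost_rot_gt0 p S Q : orthogonal_mx Q ->
  ursubmx (boost_rot p S Q *m E) = 0 -> 0 < 1 - (w *m w^T) ord0 ord0.
Proof.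
move=> QQ; rewrite ursubmx_boost_rot_vielbein => /(congr1 (mulmx^~ (invmx e3))).
rewrite mul0mx mulmxDl mulmxK // -scalemxAl addrC => /eqP; rewrite addr_eq0 => /eqP pQ.
have pp : p^T *m p = lorentz_factor p ^+ 2 *: (w *m w^T).
  rewrite -{2}(trmxK p) -(mulmx_orthogonal_trmx _ QQ) pQ linearN /= mulNmx.
  by rewrite mulmxN opprK linearZ /= -scalemxAl -scalemxAr scalerA.
have := lorentz_factor_sqr p; rewrite pp mxE => gamma2.
have gamma2_gt0 : 0 < lorentz_factor p ^+ 2 by rewrite exprn_gt0 ?lorentz_factor_gt0.
by rewrite -(pmulr_rgt0 _ gamma2_gt0) mulrBr mulr1 {1}gamma2 addrK ltr01.
Qed.

Lemma block_lower_boost_rot_exists : 0 < 1 - (w *m w^T) ord0 ord0 ->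
  exists (p : 'cV[R]_s) (S Q : 'M[R]_s),
    [/\ is_psd_sqrt (1%:M + p *m p^T) S, orthogonal_mx Q,
        lorentz (boost_rot p S Q) & ursubmx (boost_rot p S Q *m E) = 0].
Proof.
set c := (w *m w^T) ord0 ord0 => D_gt0.
set gamma := (Num.sqrt (1 - c))^-1.
have gamma_gt0 : 0 < gamma by rewrite invr_gt0 sqrtr_gt0.
have gamma2 : gamma ^+ 2 * (1 - c) = 1.
  by rewrite exprVn sqr_sqrtr ?ltW // mulVf // gt_eqF.
set p := - (gamma *: w^T).
have pT : p^T = - (gamma *: w) by rewrite [LHS]linearN /= linearZ /= trmxK.
have pp : p^T *m p = gamma ^+ 2 *: (w *m w^T).
  rewrite -{2}[p]trmxK pT linearN /= mulNmx mulmxN opprK linearZ /=.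
  by rewrite -scalemxAl -scalemxAr scalerA.
have gamma_p : lorentz_factor p = gamma.
  rewrite /lorentz_factor pp mxE -/c -[1](gamma2) mulrBr mulr1 subrK.
  by rewrite sqrtr_sqr gtr0_norm.
exists p, (boost_sqrt p), 1%:M; split.
- exact: is_psd_sqrt_boost_sqrt.
- by rewrite /orthogonal_mx trmx1 mulmx1.
- exact: lorentz_boost.
rewrite ursubmx_boost_rot_vielbein mulmx1 gamma_p pT.
by rewrite mulNmx -scalemxAl mulmxKV // subrr.
Qed.

Hypothesis uE : E \in unitmx.

Lemma invmx_vielbein_row0 (X := invmx E) :
  ursubmx X = - (ulsubmx X *m w) /\
  ulsubmx X ord0 ord0 * (e0 - (w *m e2) ord0 ord0) = 1.
Proof.
have : X *m E = 1%:M by rewrite mulVmx.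
rewrite -[X in X *m _]submxK mulmx_block (scalar_mx_block 1 s).
case/eq_block_mx => X_e0 X_e1 _ _.
have Xur : ursubmx X = - (ulsubmx X *m w).
  apply/eqP; rewrite -addr_eq0 -(inj_eq (can_inj (mulmxK ue3))) mul0mx mulmxDl.
  by rewrite !mulmxA mulmxKV // addrC X_e1.
split=> //.
rewrite Xur mulNmx -mulmxA (mx11_scalar (ulsubmx X)) (mx11_scalar (w *m e2)) in X_e0.
rewrite -!scalar_mxM -raddfB in X_e0.
have := congr1 (fun M : 'M_1 => M ord0 ord0) X_e0.
by rewrite !mxE /= !mulr1n mulrBr.
Qed.

Lemma invmx_metric_vielbein00 : exists a : R,
  a * (e0 - (w *m e2) ord0 ord0) = 1 /\
  ulsubmx (invmx (E^T *m minkowski R s *m E)) ord0 ord0 =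
  - (a ^+ 2 * (1 - (w *m w^T) ord0 ord0)).
Proof.
have [Xur a_sigma] := invmx_vielbein_row0.
set a := ulsubmx (invmx E) ord0 ord0 in a_sigma *.
have Xul : ulsubmx (invmx E) = a%:M := mx11_scalar _.
exists a; split=> //.
rewrite invmx_metric // ulsubmx_conj_minkowski Xur Xul mul_scalar_mx.
rewrite mulNmx [(- _)^T]linearN /= mulmxN opprK [(a *: w)^T]linearZ /=.
rewrite tr_scalar_mx -scalemxAl -scalemxAr scalerA -scalar_mxM.
rewrite [w *m w^T in LHS]mx11_scalar scale_scalar_mx -raddfB mxE /= mulr1n.
by ring.
Qed.

End Vielbein.

Theorem lemma2 (R : rcfType) (s : nat) (hs : (0 < s)%N)
  (e0 : R) (e1 e2 : 'cV[R]_s) (e3 : 'M[R]_s)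
  (hE : vielbein e0 e1 e2 e3 \in unitmx) (he3 : e3 \in unitmx) :
  let E := vielbein e0 e1 e2 e3 in
  let g := E^T *m minkowski R s *m E in
  let g00 := ulsubmx (invmx g) ord0 ord0 in
  let D := 1 - (e1^T *m invmx (e3^T *m e3) *m e1) ord0 ord0 in
  let sigma := e0 - (e1^T *m invmx e3 *m e2) ord0 ord0 in
  (* (i) <-> (ii) *)
  ((exists (p : 'cV[R]_s) (S Q : 'M[R]_s),
      [/\ is_psd_sqrt (1%:M + p *m p^T) S, orthogonal_mx Q,
          lorentz (boost_rot p S Q)
        & ursubmx (boost_rot p S Q *m E) = 0]) <-> 0 < D)
  (* (ii) <-> (iii) *)
  /\ (0 < D <-> g00 < 0)
  (* the lapse formula N^2 = (-g^00)^{-1} = sigma^2 / D *)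
  /\ (g00 != 0 -> - g00^-1 = sigma ^+ 2 / D).
Proof.
move=> E g g00 D sigma.
have D_w : D = 1 - (e1^T *m invmx e3 *m (e1^T *m invmx e3)^T) ord0 ord0.
  by rewrite /D quad_invmx_trmx_mul.
have [a [a_sigma g00_a]] := invmx_metric_vielbein00 he3 hE.
rewrite -/g -/g00 -/sigma -D_w in a_sigma g00_a.
have a_neq0 : a != 0 by apply: contra_eq_neq a_sigma => ->; rewrite mul0r eq_sym oner_neq0.
have a2_gt0 : 0 < a ^+ 2 by rewrite exprn_even_gt0 //=.
split; [|split].
- rewrite D_w; split; last exact: block_lower_boost_rot_exists.
  by case=> p [S [Q [_ QQ _ EL]]]; exact: block_lower_boost_rot_gt0 QQ EL.
- by rewrite g00_a oppr_lt0 pmulr_rgt0.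
rewrite g00_a => g00_neq0.
have D_neq0 : D != 0 by apply: contraNneq g00_neq0 => ->; rewrite mulr0 oppr0.
have -> : sigma = a^-1 by rewrite -[sigma]mul1r -(mulVf a_neq0) -mulrA a_sigma mulr1.
by field; rewrite D_neq0 a_neq0.
Qed.
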